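(* Let $\mathbf{x} \in \Omega$ be fixed, let $S_{\mathbf{x}} \subseteq S$ be the set of values occurring in $\mathbf{x}$, and suppose $G, G' \in \mathcal{F}$ agree both cumulatively and pointwise on $S_{\mathbf{x}}$. Let $\mathbf{Y}$ be a sample of $n$ i.i.d. draws with order statistics $Y_{(1)} \le \dots \le Y_{(n)}$. Then for every $i \in \{1,\dots,n\}$, $$P_G[x_{(i)} = Y_{(i)} \mid Y_{(j)} = x_{(j)}\ \forall j < i] = P_{G'}[x_{(i)} = Y_{(i)} \mid Y_{(j)} = x_{(j)}\ \forall j < i]$$ and $$P_G[x_{(i)} < Y_{(i)} \mid Y_{(j)} = x_{(j)}\ \forall j < i] = P_{G'}[x_{(i)} < Y_{(i)} \mid Y_{(j)} = x_{(j)}\ \forall j < i],$$ where for $i = 1$ the conditioning is vacuous (unconditional probabilities), and for $i \ge 2$ the conditioning event is assumed to have positive probability under $G$ and under $G'$.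
   Context: $S \subset \mathbb{R}$ is a finite set, $\mathcal{F}$ the set of probability distributions on $S$, and $\Omega$ the set of samples of size $n$ with entries in $S$, identified with their sorted versions $x_{(1)} \le \dots \le x_{(n)}$. $P_H$ denotes probability when the entries of $\mathbf{Y}$ are i.i.d. with distribution $H$. For $C \subseteq S$, $G,G'$ agree pointwise on $C$ if $P_G[X = s] = P_{G'}[X = s]$ for all $s \in C$, and cumulatively on $C$ if $P_G[X \le s] = P_{G'}[X \le s]$ for all $s \in C$, where $X$ is a single draw. *)

From HB Require Import structures.
From mathcomp Require Import all_boot all_order all_algebra.
From mathcomp Require Import reals.
Set Implicit Arguments. Unset Strict Implicit. Unset Printing Implicit Defensive.
Import Order.TTheory GRing.Theory Num.Theory.
Local Open Scope ring_scope.

(* The finite support set S ⊂ ℝ is given as a duplicate-free list S : seq R;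
   its elements form the finite type [seq_sub S]. *)
Section Defs.
Variable R : realType.
Variable S : seq R.
Local Notation T := (seq_sub S).

Definition is_dist (g : {ffun T -> R}) : Prop :=
  (forall s, 0 <= g s) /\ \sum_(s : T) g s = 1.

(* P_H[A] for the sample Y of n i.i.d. draws with distribution H. *)
Definition prob (n : nat) (g : {ffun T -> R}) (A : pred (n.-tuple T)) : R :=
  \sum_(y : n.-tuple T | A y) \prod_(k < n) g (tnth y k).

Definition cprob (n : nat) (g : {ffun T -> R}) (A B : pred (n.-tuple T)) : R :=
  prob g [pred y | A y && B y] / prob g B.

(* sorted version of a sample: order statistics z_(1) <= ... <= z_(n),
   stored 0-indexed *)
Definition ostat (n : nat) (y : n.-tuple T) : seq R := sort <=%R (map val y).

(* i-th order statistic, 0-indexed (i.e. z_(i+1)) *)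
Definition ost (n : nat) (y : n.-tuple T) (i : nat) : R := nth 0 (ostat y) i.

Definition prefix_event (n : nat) (x : n.-tuple T) (i : nat) : pred (n.-tuple T) :=
  [pred y | [forall j : 'I_n, (j < i)%N ==> (ost y j == ost x j)]].

Definition agree_pointwise (C : pred T) (g g' : {ffun T -> R}) : Prop :=
  forall s, C s -> g s = g' s.

Definition cdf (g : {ffun T -> R}) (s : T) : R :=
  \sum_(t : T | val t <= val s) g t.

Definition agree_cumulative (C : pred T) (g g' : {ffun T -> R}) : Prop :=
  forall s, C s -> cdf g s = cdf g' s.

End Defs.

From HB Require Import structures.
From mathcomp Require Import all_boot all_order all_algebra.
From mathcomp Require Import reals.
Import Order.TTheory GRing.Theory Num.Theory.
Local Open Scope ring_scope.
Set Implicit Arguments. Unset Strict Implicit.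

(* The values of x split S into atoms: each {a} with a in x, and each gap
   strictly between consecutive values of x.  Every atom is the difference of
   two nested initial segments among set0, S, {t <= a}, {t < a} (a in x), and
   G - G' has total mass 0 on each of those, so G and G' give the same mass to
   every atom.  Since Y_(j) <= a iff more than j entries of Y are <= a, the
   events of the statement only depend on which atom each entry of Y falls
   in; and the law of that atom pattern under an i.i.d. sample only depends on
   the atom masses. *)

Section ProductSums.
Variables (R : comPzSemiRingType) (T : finType) (n : nat).

Lemma sum_tuple_prod (F : 'I_n -> T -> R) (P : 'I_n -> pred T) :
  \sum_(y : n.-tuple T | [forall k, P k (tnth y k)]) \prod_k F k (tnth y k)
  = \prod_k \sum_(s | P k s) F k s.
Proof.
rewrite bigA_distr_big_dep (reindex (fun f : {ffun 'I_n -> T} => [tuple f k | k < n])).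
  apply: eq_big => [f|f _]; last by apply: eq_bigr => k _; rewrite tnth_mktuple.
  by apply/forallP/familyP => Pf k; have := Pf k; rewrite tnth_mktuple.
exists (fun y : n.-tuple T => [ffun k => tnth y k]) => [f _|y _].
  by apply/ffunP => k; rewrite ffunE tnth_mktuple.
by apply: eq_from_tnth => k; rewrite tnth_mktuple ffunE.
Qed.

Lemma eq_sum_prod_tuple_fibers (V : finType) (c : T -> V) (g g' : T -> R)
    (A : pred (n.-tuple T)) :
  (forall v, \sum_(s | c s == v) g s = \sum_(s | c s == v) g' s) ->
  (forall y y' : n.-tuple T, map c y = map c y' -> A y = A y') ->
  \sum_(y | A y) \prod_k g (tnth y k) = \sum_(y | A y) \prod_k g' (tnth y k).
Proof.
move=> eq_g invA; rewrite !(partition_big (map_tuple c) predT) //=.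
apply: eq_bigr => z _.
have [y0 /andP[Ay0 /eqP y0z] | noA] :=
  pickP [pred y | A y && (map_tuple c y == z)]; last by rewrite !big_pred0.
have fiberE y : A y && (map_tuple c y == z) = [forall k, c (tnth y k) == tnth z k].
  rewrite -(eq_forallb (fun k => congr1 (eq_op^~ _) (tnth_map c y k))) -eqEtuple.
  case: eqP => [yz|]; rewrite ?andbF // andbT (invA y y0) //.
  by rewrite -[map c y]/(val (map_tuple c y)) yz -y0z.
rewrite !(eq_bigl _ _ fiberE) !(sum_tuple_prod (fun=> _) (fun k s => c s == tnth z k)).
by apply: eq_bigr => k _; apply: eq_g.
Qed.

End ProductSums.

Section LowerSets.
Variables (T : finType) (d : Order.disp_t) (K : orderType d) (f : T -> K).

Definition lower_set (A : {set T}) := forall t u, u \in A -> (f t <= f u)%O -> t \in A.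

Lemma lower_set_chain A B : lower_set A -> lower_set B -> (A \subset B) || (B \subset A).
Proof.
move=> lowA lowB; have [//|/subsetPn[a aA aNB]] := boolP (A \subset B).
apply/subsetP => b bB; apply: lowA aA _; rewrite leNgt; apply/negP => /ltW ab.
by rewrite (lowB a b bB ab) in aNB.
Qed.

End LowerSets.

Lemma chain_card_subset (T : finType) (A C : {set T}) :
  (A \subset C) || (C \subset A) -> (#|A| <= #|C|)%N -> A \subset C.
Proof.
by case/orP=> [//|CA] AC; have /eqP -> : C == A by rewrite eqEcard CA.
Qed.

Section Cuts.
Variables (T : finType) (cuts : {set {set T}}).

Definition cuts_at (t : T) : {set {set T}} := [set A in cuts | t \in A].

Lemma count_mem_cut (A : {set T}) (y y' : seq T) : A \in cuts ->
  map cuts_at y = map cuts_at y' -> count [in A] y = count [in A] y'.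
Proof.
move=> Acuts yy'; have cutE : [in A] =1 preim cuts_at (fun C => A \in C).
  by move=> t; rewrite /= inE Acuts.
by rewrite !(eq_count cutE) -!count_map yy'.
Qed.

Section NullCuts.
Variables (V : zmodType) (H : T -> V).
Hypothesis cuts0 : set0 \in cuts.
Hypothesis cutsT : setT \in cuts.
Hypothesis cuts_chain : {in cuts &, forall A B : {set T}, (A \subset B) || (B \subset A)}.
Hypothesis sum_cut_eq0 : {in cuts, forall A : {set T}, \sum_(t in A) H t = 0}.

Lemma sum_cell_eq0 (v : {set {set T}}) : \sum_(t | cuts_at t == v) H t = 0.
Proof.
have [s /eqP <- | no_cell] := pickP (fun t => cuts_at t == v); last by rewrite big_pred0.
have sT : (setT \in cuts) && (s \in setT) by rewrite cutsT inE.
have sN0 : (set0 \in cuts) && (s \notin set0) by rewrite cuts0 inE.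
(* A is the least cut containing s and B the largest one avoiding s: the cell
   of s is A :\: B. *)
have [A /andP[Acuts sA] minA] :=
  @arg_minnP _ setT [pred C | (C \in cuts) && (s \in C)] (fun C => #|C|) sT.
have [B /andP[Bcuts sNB] maxB] :=
  @arg_maxnP _ set0 [pred C | (C \in cuts) && (s \notin C)] (fun C => #|C|) sN0.
have A_min C : C \in cuts -> s \in C -> A \subset C.
  move=> Ccuts sC; apply: chain_card_subset (cuts_chain Acuts Ccuts) (minA C _).
  exact/andP.
have B_max C : C \in cuts -> s \notin C -> C \subset B.
  move=> Ccuts sNC; apply: chain_card_subset (cuts_chain Ccuts Bcuts) (maxB C _).
  exact/andP.
have BA : B \subset A.
  have /orP[AB|//] := cuts_chain Acuts Bcuts.
  by rewrite (subsetP AB s sA) in sNB.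
have cellE t : (cuts_at t == cuts_at s) = (t \in A :\: B).
  rewrite !inE; apply/eqP/andP => [ts|[tNB tA]].
    have memE C : (C \in cuts_at t) = (C \in cuts_at s) by rewrite ts.
    have := memE A; have := memE B.
    by rewrite !inE Acuts Bcuts sA (negbTE sNB) /= => -> ->.
  apply/setP => C; rewrite !inE; have [Ccuts|//] := boolP (C \in cuts).
  have [sC|sNC] := boolP (s \in C); first exact: subsetP (A_min C Ccuts sC) t tA.
  by apply/negP => /(subsetP (B_max C Ccuts sNC)); apply/negP.
rewrite (eq_bigl _ _ cellE); apply/eqP; move: (sum_cut_eq0 Acuts).
by rewrite (big_setID B) /= (setIidPr BA) (sum_cut_eq0 Bcuts) add0r => ->.
Qed.

End NullCuts.
End Cuts.

Lemma nth_sorted_count d (K : porderType d) (x0 : K) (s : seq K) (p : pred K) j :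
  sorted <=%O s -> (forall u w, p u -> (w <= u)%O -> p w) -> (j < size s)%N ->
  p (nth x0 s j) = (j < count p s)%N.
Proof.
move=> + p_down; elim: s j => [|h t IH] j //= sorted_ht j_lt.
have sorted_t : sorted <=%O t := path_sorted sorted_ht.
have [ph|pNh] := boolP (p h).
  by case: j j_lt => [|j] j_lt //=; rewrite add1n ltnS IH.
have h_min : all (<=%O h) t by apply: order_path_min => //; exact: le_trans.
have pNt w : w \in t -> ~~ p w.
  by move=> wt; apply/negP => /p_down/(_ (allP h_min w wt)); apply/negP.
have -> : count p t = 0%N by apply/eqP; rewrite -leqn0 leqNgt -has_count; apply/hasPn.
rewrite add0n ltn0; apply/negbTE.
have /predU1P[->|] := mem_nth x0 (j_lt : (j < size (h :: t))%N); [exact: pNh | exact: pNt].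
Qed.

Section OrderStatistics.
Variables (R : realType) (S : seq R) (n : nat).
Local Notation T := (seq_sub S).

Lemma ost_count (y : n.-tuple T) j (p : pred R) :
  (forall u w, p u -> w <= u -> p w) -> (j < n)%N ->
  p (ost y j) = (j < count (p \o val) y)%N.
Proof.
move=> p_down j_lt; rewrite /ost /ostat nth_sorted_count //.
- by rewrite (permP (permEl (perm_sort _ _))) count_map.
- exact/sort_sorted/le_total.
- by rewrite size_sort size_map size_tuple.
Qed.

Lemma ost_mem (x : n.-tuple T) j : (j < n)%N -> exists2 a, a \in x & ost x j = val a.
Proof.
move=> j_lt; have /mapP[a ax ->] : ost x j \in map val x.
  by rewrite -(mem_sort <=%R) mem_nth // size_sort size_map size_tuple.
by exists a.
Qed.

End OrderStatistics.

Section SampleCuts.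
Variables (R : realType) (S : seq R) (n : nat) (x : n.-tuple (seq_sub S)).
Local Notation T := (seq_sub S).

Definition le_cut (a : T) : {set T} := [set t | val t <= val a].
Definition lt_cut (a : T) : {set T} := [set t | val t < val a].

Definition sample_cuts : {set {set T}} :=
  set0 |: (setT |: ([set le_cut a | a in x] :|: [set lt_cut a | a in x])).

Local Notation cell := (cuts_at sample_cuts).

Lemma sample_cuts_lower A : A \in sample_cuts -> lower_set val A.
Proof.
rewrite !inE => /or4P[] /=.
- by move=> /eqP -> t u; rewrite inE.
- by move=> /eqP -> t u; rewrite !inE.
- by case/imsetP=> a _ -> t u; rewrite !inE => /[swap]; exact: le_trans.
- by case/imsetP=> a _ -> t u; rewrite !inE => /[swap]; exact: le_lt_trans.
Qed.

Lemma sample_cuts_chain :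
  {in sample_cuts &, forall A B : {set T}, (A \subset B) || (B \subset A)}.
Proof. by move=> A B /sample_cuts_lower lowA /sample_cuts_lower; exact: lower_set_chain. Qed.

Lemma sample_cuts_null (G G' : {ffun T -> R}) :
  is_dist G -> is_dist G' ->
  agree_pointwise (fun s => s \in x) G G' ->
  agree_cumulative (fun s => s \in x) G G' ->
  {in sample_cuts, forall A : {set T}, \sum_(t in A) (G t - G' t) = 0}.
Proof.
move=> [_ sumG] [_ sumG'] pointG cumG.
have le_null a : a \in x -> \sum_(t in le_cut a) (G t - G' t) = 0.
  move=> ax; rewrite (eq_bigl (fun t => val t <= val a)) => [|t]; last by rewrite inE.
  by rewrite sumrB -!/(cdf _ a) cumG ?subrr.
move=> A; rewrite !inE => /or4P[/eqP->|/eqP->| |].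
- by rewrite big_set0.
- by rewrite (eq_bigl _ _ (@in_setT _)) sumrB sumG sumG' subrr.
- by case/imsetP=> a ax ->; exact: le_null.
case/imsetP=> a ax ->.
rewrite -[RHS](le_null a ax) [RHS](big_setD1 a) ?inE // pointG // subrr /= add0r.
by apply: eq_bigl => t; rewrite !inE lt_neqAle val_eqE.
Qed.

Lemma prob_cell_invariant (G G' : {ffun T -> R}) :
  is_dist G -> is_dist G' ->
  agree_pointwise (fun s => s \in x) G G' ->
  agree_cumulative (fun s => s \in x) G G' ->
  forall A : pred (n.-tuple T),
    (forall y y' : n.-tuple T, map cell y = map cell y' -> A y = A y') ->
    prob G A = prob G' A.
Proof.
move=> dG dG' pointG cumG A invA; apply: eq_sum_prod_tuple_fibers invA => v.
apply/eqP; rewrite -subr_eq0 -sumrB; apply/eqP; apply: sum_cell_eq0.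
- by rewrite !inE eqxx.
- by rewrite !inE eqxx orbT.
- exact: sample_cuts_chain.
- exact: sample_cuts_null.
Qed.

Section CellInvariance.
Variables (y y' : n.-tuple T) (j : nat).
Hypothesis same_cells : map cell y = map cell y'.
Hypothesis j_lt : (j < n)%N.

Lemma ost_lower_cut_invariant (A : {set T}) (p : pred R) :
  A \in sample_cuts -> (forall t, (t \in A) = p (val t)) ->
  (forall u w, p u -> w <= u -> p w) -> p (ost y j) = p (ost y' j).
Proof.
move=> Acuts A_p p_down.
by rewrite !ost_count // -!(eq_count A_p) (count_mem_cut Acuts same_cells).
Qed.

Lemma ost_threshold_invariant (a : T) : a \in x ->
  ((ost y j < val a) = (ost y' j < val a)) /\ ((ost y j <= val a) = (ost y' j <= val a)).
Proof.
move=> ax; split.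
- apply: (@ost_lower_cut_invariant (lt_cut a) (fun u => u < val a)).
  + by rewrite !inE imset_f ?orbT.
  + by move=> t; rewrite inE.
  + by move=> u w /[swap]; exact: le_lt_trans.
- apply: (@ost_lower_cut_invariant (le_cut a) (fun u => u <= val a)).
  + by rewrite !inE imset_f ?orbT.
  + by move=> t; rewrite inE.
  + by move=> u w /[swap]; exact: le_trans.
Qed.

Lemma ost_eq_invariant : (ost y j == ost x j) = (ost y' j == ost x j).
Proof.
have [a ax ->] := ost_mem x j_lt; have [lt_inv le_inv] := ost_threshold_invariant ax.
by rewrite !eq_le !(leNgt (val a)) lt_inv le_inv.
Qed.

Lemma ost_gt_invariant : (ost x j < ost y j) = (ost x j < ost y' j).
Proof.
have [a ax ->] := ost_mem x j_lt; have [_ le_inv] := ost_threshold_invariant ax.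
by rewrite !ltNge le_inv.
Qed.

End CellInvariance.

Lemma prefix_event_invariant (i : nat) (y y' : n.-tuple T) :
  map cell y = map cell y' -> prefix_event x i y = prefix_event x i y'.
Proof.
move=> same_cells; apply: eq_forallb => j.
by rewrite (ost_eq_invariant same_cells (ltn_ord j)).
Qed.

End SampleCuts.

Theorem lemma10 (R : realType) (S : seq R) (n : nat)
  (x : n.-tuple (seq_sub S)) (G G' : {ffun seq_sub S -> R}) :
  is_dist G -> is_dist G' ->
  agree_pointwise (fun s => s \in x) G G' ->
  agree_cumulative (fun s => s \in x) G G' ->
  forall i : 'I_n,
    ((0 < i)%N -> 0 < prob G (prefix_event x i) /\ 0 < prob G' (prefix_event x i)) ->
    cprob G [pred y | ost x i == ost y i] (prefix_event x i) =
      cprob G' [pred y | ost x i == ost y i] (prefix_event x i)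
    /\
    cprob G [pred y | ost x i < ost y i] (prefix_event x i) =
      cprob G' [pred y | ost x i < ost y i] (prefix_event x i).
Proof.
move=> dG dG' pointG cumG i _.
have probE := prob_cell_invariant dG dG' pointG cumG.
have prefixE := @prefix_event_invariant _ _ _ x i.
rewrite /cprob (probE _ prefixE); split; congr (_ / _); apply: probE => y y' same_cells /=.
  rewrite !(eq_sym (ost x i)) (ost_eq_invariant same_cells (ltn_ord i)).
  by rewrite (prefixE _ _ same_cells).
by rewrite (ost_gt_invariant same_cells (ltn_ord i)) (prefixE _ _ same_cells).
Qed.
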